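(* Let $L$ be an infinite set and let $Q$ be either the edgeless cube $Q_L$ or the edged cube $\bar Q_L$. If $s$ is a universally convergent basic sequence and $f$ is the terminal labelling obtained by applying $s$ to the identity labelling of $Q$, then $f:Q\to Q$ is a bijection, and $f(C)=C$ for every cluster $C$.
   Context: Let $L$ be an infinite set, $-L=\{-r:r\in L\}$ a disjoint copy of $L$, and $0$ a new element; $L^\dagger=-L\cup\{0\}\cup L$ with $-(-r)=r$, $-0=0$. Adjoin $\pm\infty$ with $-(+\infty)=-\infty$ and set $\bar L^\dagger=L^\dagger\cup\{\pm\infty\}$. Points of $U=(\bar L^\dagger)^3$ have coordinates $x,y,z$. The edgeless cube $Q_L$ is the set of points of $U$ with exactly one coordinate in $\{\pm\infty\}$ (cells). The edged cube $\bar Q_L$ is the set of cells $(p,i)$ with $p\in U$, $i\in\{x,y,z\}$, $p_i\in\{\pm\infty\}$ ($i$ marks the face). For $i\in\{x,y,z\}$, $\alpha\in\bar L^\dagger$, the quarter-turn twist $T_{i,\alpha}$ is the permutation of cells fixing every cell whose point $p$ has $p_i\ne\alpha$ and acting on the others by $T_{x,\alpha}(\alpha,y,z)=(\alpha,-z,y)$, $T_{y,\alpha}(x,\alpha,z)=(z,\alpha,-x)$, $T_{z,\alpha}(x,y,\alpha)=(-y,x,\alpha)$ (in $\bar Q_L$ the marked coordinate is carried along by the rotation). Basic twists are $T,T^2,T^3$ for quarter-turn twists $T$. A basic sequence is a sequence $\langle\sigma_\eta:\eta<\theta\rangle$ of basic twists of ordinal length $\theta$. A labelling is a map $f$ from cells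 to $X\cup\{\mathrm{NaC}\}$ for a set $X\not\ni\mathrm{NaC}$; it is legal if it never takes value NaC. A twist $\sigma$ acts by $(\sigma f)(c)=f(\sigma^{-1}c)$. Applying $\langle\sigma_\eta:\eta<\theta\rangle$ to $f_0$ produces $f_{\eta+1}=\sigma_\eta f_\eta$, and for limit $\lambda\le\theta$, $f_\lambda(c)$ is the eventually constant value of $f_\eta(c)$ ($\eta<\lambda$) if it exists and NaC otherwise; $f_\theta$ is the terminal labelling. The identity labelling labels each cell by itself (values in the set of cells); a basic sequence is universally convergent if its terminal labelling from the identity labelling is legal. The cluster of a cell is its orbit under the group generated by all quarter-turn twists. *)

From Stdlib Require Import ClassicalEpsilon Relations List.
Set Implicit Arguments.

Inductive Ldag (L : Type) := LNeg (r : L) | LZero | LPos (r : L).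
Arguments LZero {L}.
Inductive Lbar (L : Type) := Fin (a : Ldag L) | PInf | MInf.
Arguments PInf {L}. Arguments MInf {L}.

Definition negd L (a : Ldag L) : Ldag L :=
  match a with LNeg r => LPos r | LZero => LZero | LPos r => LNeg r end.
Definition negbar L (a : Lbar L) : Lbar L :=
  match a with Fin b => Fin (negd b) | PInf => MInf | MInf => PInf end.
Definition is_inf L (a : Lbar L) : bool :=
  match a with Fin _ => false | _ => true end.

Definition point L := (Lbar L * Lbar L * Lbar L)%type.
Inductive axis := AX | AY | AZ.

Definition coord L (p : point L) (i : axis) : Lbar L :=
  match p, i with
  | (x, _, _), AX => x | (_, y, _), AY => y | (_, _, z), AZ => z end.

Definition rotp L (i : axis) (p : point L) : point L :=
  match p with (x, y, z) =>
  match i with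
  | AX => (x, negbar z, y)
  | AY => (z, y, negbar x)
  | AZ => (negbar y, x, z)
  end end.

(* how the marked face coordinate is carried along by the rotation *)
Definition rotm (i m : axis) : axis :=
  match i, m with
  | AX, AY => AZ | AX, AZ => AY
  | AY, AX => AZ | AY, AZ => AX
  | AZ, AX => AY | AZ, AY => AX
  | _, m => m end.

Inductive cube_kind := Edgeless | Edged.

Definition raw L (k : cube_kind) : Type :=
  match k with Edgeless => point L | Edged => (point L * axis)%type end.

Definition raw_pt L (k : cube_kind) : raw L k -> point L :=
  match k with Edgeless => fun p => p | Edged => fun q => fst q end.

Definition b2n (b : bool) : nat := if b then 1 else 0.

Definition raw_ok L (k : cube_kind) : raw L k -> bool :=
  match k with
  | Edgeless => fun p =>
      Nat.eqb (b2n (is_inf (coord p AX)) + b2n (is_inf (coord p AY))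
               + b2n (is_inf (coord p AZ))) 1
  | Edged => fun q => is_inf (coord (fst q) (snd q))
  end.

Definition cell L (k : cube_kind) := { c : raw L k | @raw_ok L k c = true }.
Arguments raw_ok {L} k _.
Arguments raw_pt {L} k _.

Definition raw_rot L (k : cube_kind) (i : axis) : raw L k -> raw L k :=
  match k with
  | Edgeless => fun p => rotp i p
  | Edged => fun q => (rotp i (fst q), rotm i (snd q))
  end.

Arguments raw_rot {L} k i _.

Lemma is_inf_neg L (a : Lbar L) : is_inf (negbar a) = is_inf a.
Proof. destruct a; reflexivity. Qed.

Lemma raw_rot_ok L k i (c : raw L k) : raw_ok k c = true -> raw_ok k (raw_rot k i c) = true.
Proof.
  destruct k; simpl.
  - destruct c as [[x y] z]; destruct i; simpl; rewrite ?is_inf_neg;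
      destruct (is_inf x), (is_inf y), (is_inf z); simpl; auto.
  - destruct c as [[[x y] z] m]; destruct i, m; simpl; rewrite ?is_inf_neg; auto.
Qed.

Definition qt_raw L k (i : axis) (alpha : Lbar L) (c : raw L k) : raw L k :=
  if excluded_middle_informative (coord (raw_pt k c) i = alpha)
  then raw_rot k i c else c.

Lemma qt_raw_ok L k i alpha (c : raw L k) :
  raw_ok k c = true -> raw_ok k (qt_raw k i alpha c) = true.
Proof.
  unfold qt_raw; destruct (excluded_middle_informative _); auto using raw_rot_ok.
Qed.

Definition qt L k (i : axis) (alpha : Lbar L) (c : cell L k) : cell L k :=
  exist _ (qt_raw k i alpha (proj1_sig c)) (@qt_raw_ok L k i alpha _ (proj2_sig c)).

Arguments qt {L} k i alpha c.
Arguments qt_raw {L} k i alpha c.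

Inductive pow3 := Pow1 | Pow2 | Pow3.
Definition pow_nat (n : pow3) : nat := match n with Pow1 => 1 | Pow2 => 2 | Pow3 => 3 end.

Record twist L := Twist { tw_axis : axis; tw_val : Lbar L; tw_pow : pow3 }.

Definition twist_fun L k (t : twist L) : cell L k -> cell L k :=
  Nat.iter (pow_nat (tw_pow t)) (qt k (tw_axis t) (tw_val t)).
(* its inverse sigma^{-1} = T_{i,alpha}^(4-n)  (since T^4 = id) *)
Definition twist_inv L k (t : twist L) : cell L k -> cell L k :=
  Nat.iter (4 - pow_nat (tw_pow t)) (qt k (tw_axis t) (tw_val t)).

Arguments twist_fun {L} k t _.
Arguments twist_inv {L} k t _.

(* labellings with values in X u {NaC}; None = NaC *)
Definition labelling L k (X : Type) := cell L k -> option X.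
Definition legal L k X (f : labelling L k X) := forall c, f c <> None.

Definition act L k X (t : twist L) (f : labelling L k X) : labelling L k X :=
  fun c => f (twist_inv k t c).

Arguments act {L} {k} {X} t f c.
Arguments legal {L} {k} {X} f.

(* ---------- transfinite sequences ----------
   A basic sequence of ordinal length theta is s : I -> twist L where (I, lt) is
   a well-order (of order type theta). Stages eta <= theta are  option I :
   Some e is the stage e < theta, None is theta itself. *)
Definition slt I (lt : I -> I -> Prop) (x y : option I) : Prop :=
  match x, y with
  | Some a, Some b => lt a b
  | Some _, None => True
  | None, _ => False
  end.

Lemma wf_slt I (lt : I -> I -> Prop) : well_founded lt -> well_founded (slt lt).
Proof.
  intros wf.
  assert (HS : forall a, Acc (slt lt) (Some a)).
  { intro a; induction (wf a) as [a _ IH]; constructor.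
    intros [b|] H; simpl in H; [apply IH; exact H | contradiction]. }
  intros [a|]; [apply HS|]. constructor; intros [b|] H; [apply HS | contradiction].
Qed.

Definition apply_at L k X I (s : I -> twist L) (y : option I) (f : labelling L k X)
  : labelling L k X :=
  match y with Some e => act (s e) f | None => f end.

Arguments apply_at {L} k {X} {I} s y f _.

Definition is_pred I (lt : I -> I -> Prop) (y x : option I) : Prop :=
  slt lt y x /\ forall z, slt lt y z -> ~ slt lt z x.

(* one step of the transfinite recursion, starting from the identity labelling:
   f_0 = identity, f_{eta+1} = sigma_eta f_eta, and at a limit lambda,
   f_lambda(c) = eventually constant value of f_eta(c) (eta < lambda), else NaC *)
Definition run_body L k I (lt : I -> I -> Prop) (s : I -> twist L) (x : option I)
  (rec : forall y, slt lt y x -> labelling L k (cell L k)) : labelling L k (cell L k) :=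
  match excluded_middle_informative (exists y, is_pred lt y x) with
  | left H =>
      let (y, Hy) := constructive_indefinite_description _ H in
      apply_at k s y (rec y (proj1 Hy))
  | right _ =>
      match excluded_middle_informative (exists y, slt lt y x) with
      | left _ => fun c =>
          match excluded_middle_informative
                  (exists v : option (cell L k), exists y0, slt lt y0 x /\
                     forall y (h : slt lt y x), (y0 = y \/ slt lt y0 y) -> rec y h c = v) with
          | left Hv => proj1_sig (constructive_indefinite_description _ Hv)
          | right _ => None
          end
      | right _ => fun c => Some c
      end
  end.

Arguments run_body {L} k {I} {lt} s x rec _.

Definition run_from_identity L k I (lt : I -> I -> Prop) (wf : well_founded lt)
  (s : I -> twist L) : option I -> labelling L k (cell L k) :=
  Fix (wf_slt wf) (fun _ => labelling L k (cell L k)) (run_body k s).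

Arguments run_from_identity {L} k {I} {lt} wf s _ _.

Definition terminal_from_identity L k I (lt : I -> I -> Prop) (wf : well_founded lt)
  (s : I -> twist L) : labelling L k (cell L k) :=
  run_from_identity k wf s None.

Arguments terminal_from_identity {L} k {I} {lt} wf s _.

Definition universally_convergent L k I (lt : I -> I -> Prop) (wf : well_founded lt)
  (s : I -> twist L) : Prop :=
  legal (terminal_from_identity k wf s).

Arguments universally_convergent {L} k {I} {lt} wf s.

Definition qt_step L k (c d : cell L k) : Prop :=
  exists i alpha, d = qt k i alpha c \/ c = qt k i alpha d.
Definition same_cluster L k : cell L k -> cell L k -> Prop :=
  clos_refl_trans (cell L k) (@qt_step L k).
Arguments qt_step {L} k c d.
Arguments same_cluster {L} k _ _.

(* Every stage f_eta of the run from the identity labelling is a partial injection that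
   moves each cell within its cluster.  A twist has both properties, and at a limit two
   cells with the same eventual value already collide at a common earlier stage, because
   the stages are totally ordered.  Clusters are finite: a quarter turn only permutes and
   negates coordinates, so the absolute values of the coordinates are invariant.  Hence a
   legal terminal labelling is an injective self-map of each finite cluster, i.e. a
   permutation of it. *)
From Stdlib Require Import List Relations ClassicalEpsilon FunctionalExtensionality.
From Stdlib Require Import Eqdep_dec Bool.
Import ListNotations.

Set Implicit Arguments.

Lemma iter_inj (T : Type) (f : T -> T) (n : nat) :
  (forall x y, f x = f y -> x = y) ->
  forall x y, Nat.iter n f x = Nat.iter n f y -> x = y.
Proof. intro f_inj; induction n as [|n IH]; simpl; auto. Qed.

Lemma inj_preserving_surj_on_finite (T : Type) (P : T -> Prop) (g : T -> T) (l : list T) :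
  (forall x, P x -> In x l) ->
  (forall x, P x -> P (g x)) ->
  (forall x y, P x -> P y -> g x = g y -> x = y) ->
  forall d, P d -> exists c, P c /\ g c = d.
Proof.
  intros Pl gP g_inj d Pd.
  assert (dec : forall x y : T, {x = y} + {x <> y})
    by (intros; apply excluded_middle_informative).
  set (lP := nodup dec (filter (fun x => if excluded_middle_informative (P x)
                                         then true else false) l)).
  assert (in_lP : forall x, In x lP <-> P x).
  { intro x; unfold lP; rewrite nodup_In, filter_In.
    destruct (excluded_middle_informative (P x)); firstorder discriminate. }
  assert (nodup_glP : NoDup (map g lP)).
  { apply NoDup_map_NoDup_ForallPairs; [|apply NoDup_nodup].
    intros x y Hx Hy; apply g_inj; apply in_lP; assumption. }
  assert (lP_in_glP : incl lP (map g lP)).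
  { apply NoDup_length_incl; [exact nodup_glP | rewrite length_map; reflexivity |].
    intros y Hy; apply in_map_iff in Hy as [x [gx Hx]]; rewrite <- gx.
    apply in_lP, gP, in_lP, Hx. }
  assert (d_in : In d (map g lP)) by apply lP_in_glP, in_lP, Pd.
  apply in_map_iff in d_in as [c [gc Hc]].
  exists c; split; [apply in_lP|]; assumption.
Qed.

Section Cells.
Variable L : Type.

Lemma cell_val_inj k (c d : cell L k) : proj1_sig c = proj1_sig d -> c = d.
Proof.
  destruct c as [r Hr], d as [r' Hr']; simpl; intros <-.
  f_equal; apply UIP_dec, bool_dec.
Qed.

Lemma negbar_inj (a b : Lbar L) : negbar a = negbar b -> a = b.
Proof. destruct a as [[]| |], b as [[]| |]; simpl; intro H; congruence. Qed.

Lemma coord_raw_rot k i (r : raw L k) :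
  coord (raw_pt k (raw_rot k i r)) i = coord (raw_pt k r) i.
Proof.
  destruct k; [destruct r as [[x y] z] | destruct r as [[[x y] z] m]]; destruct i;
    reflexivity.
Qed.

Lemma raw_rot_inj k i (r r' : raw L k) : raw_rot k i r = raw_rot k i r' -> r = r'.
Proof.
  destruct k; [destruct r as [[x y] z], r' as [[x' y'] z'] |
               destruct r as [[[x y] z] m], r' as [[[x' y'] z'] m']];
    destruct i; simpl; intro H; inversion H; subst;
    repeat match goal with H : negbar _ = negbar _ |- _ => apply negbar_inj in H; subst end;
    try reflexivity; destruct m, m'; simpl in *; congruence.
Qed.

Lemma qt_raw_inj k i a (r r' : raw L k) : qt_raw k i a r = qt_raw k i a r' -> r = r'.
Proof.
  unfold qt_raw.
  destruct (excluded_middle_informative (coord (raw_pt k r) i = a)) as [E|E],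
           (excluded_middle_informative (coord (raw_pt k r') i = a)) as [E'|E'];
    intro H.
  - exact (raw_rot_inj _ _ _ _ H).
  - contradiction E'; rewrite <- H, coord_raw_rot; exact E.
  - contradiction E; rewrite H, coord_raw_rot; exact E'.
  - exact H.
Qed.

Lemma qt_inj k i a (c d : cell L k) : qt k i a c = qt k i a d -> c = d.
Proof.
  intro H; apply cell_val_inj, (qt_raw_inj k i a).
  exact (f_equal (@proj1_sig _ _) H).
Qed.

Lemma twist_inv_inj k (t : twist L) (c d : cell L k) :
  twist_inv k t c = twist_inv k t d -> c = d.
Proof. apply iter_inj, qt_inj. Qed.

Lemma same_cluster_twist_inv k (t : twist L) (c : cell L k) :
  same_cluster k c (twist_inv k t c).
Proof.
  unfold twist_inv; apply PeanoNat.Nat.iter_invariant; [|apply rt_refl].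
  intros d Hd; eapply rt_trans; [exact Hd|].
  apply rt_step; exists (tw_axis t), (tw_val t); left; reflexivity.
Qed.

Definition abs_bar (a : Lbar L) : Lbar L :=
  match a with Fin (LNeg r) => Fin (LPos r) | MInf => PInf | b => b end.

Lemma abs_bar_negbar a : abs_bar (negbar a) = abs_bar a.
Proof. destruct a as [[]| |]; reflexivity. Qed.

Lemma abs_bar_eq a b : abs_bar a = abs_bar b -> a = b \/ a = negbar b.
Proof. destruct a as [[]| |], b as [[]| |]; simpl; intro H; inversion H; auto. Qed.

Definition abs_coords k (r : raw L k) : list (Lbar L) :=
  map (fun i => abs_bar (coord (raw_pt k r) i)) [AX; AY; AZ].

Definition signed_coords (p : point L) : list (Lbar L) :=
  flat_map (fun i => [coord p i; negbar (coord p i)]) [AX; AY; AZ].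

Lemma abs_coords_raw_rot k i (r : raw L k) a :
  In a (abs_coords k (raw_rot k i r)) <-> In a (abs_coords k r).
Proof.
  destruct k; [destruct r as [[x y] z] | destruct r as [[[x y] z] m]];
    destruct i; simpl; rewrite ?abs_bar_negbar; tauto.
Qed.

Lemma abs_coords_qt_raw k i b (r : raw L k) a :
  In a (abs_coords k (qt_raw k i b r)) <-> In a (abs_coords k r).
Proof.
  unfold qt_raw; destruct (excluded_middle_informative _); [apply abs_coords_raw_rot | tauto].
Qed.

Lemma same_cluster_abs_coords k (c d : cell L k) : same_cluster k c d ->
  forall a, In a (abs_coords k (proj1_sig d)) <-> In a (abs_coords k (proj1_sig c)).
Proof.
  induction 1 as [c d [i [b [-> | ->]]] | | c e d _ IHce _ IHed]; intro a.
  - apply abs_coords_qt_raw.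
  - symmetry; apply abs_coords_qt_raw.
  - tauto.
  - rewrite IHed; apply IHce.
Qed.

Lemma in_signed_coords k (r r0 : raw L k) i :
  incl (abs_coords k r) (abs_coords k r0) ->
  In (coord (raw_pt k r) i) (signed_coords (raw_pt k r0)).
Proof.
  intro Hincl.
  assert (Hi : In (abs_bar (coord (raw_pt k r) i)) (abs_coords k r0))
    by (apply Hincl; destruct i; simpl; tauto).
  unfold abs_coords in Hi; apply in_map_iff in Hi as [j [Hj _]]; symmetry in Hj.
  apply abs_bar_eq in Hj as [Hj | Hj]; apply in_flat_map;
    exists j; (split; [destruct j; simpl; tauto|]); rewrite Hj; simpl; tauto.
Qed.

Definition points_over (l : list (Lbar L)) : list (point L) := list_prod (list_prod l l) l.

Definition raw_candidates k : raw L k -> list (raw L k) :=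
  match k with
  | Edgeless => fun p => points_over (signed_coords p)
  | Edged => fun q => list_prod (points_over (signed_coords (fst q))) [AX; AY; AZ]
  end.

Lemma in_raw_candidates k (r r0 : raw L k) :
  incl (abs_coords k r) (abs_coords k r0) -> In r (raw_candidates k r0).
Proof.
  intro Hincl; pose proof (in_signed_coords AX Hincl) as Hx;
  pose proof (in_signed_coords AY Hincl) as Hy;
  pose proof (in_signed_coords AZ Hincl) as Hz.
  destruct k; [destruct r as [[x y] z] | destruct r as [[[x y] z] m]]; simpl in Hx, Hy, Hz.
  - repeat apply in_prod; assumption.
  - apply in_prod; [repeat apply in_prod; assumption | destruct m; simpl; tauto].
Qed.

Lemma cells_over k (l : list (raw L k)) :
  exists cs, forall c : cell L k, In (proj1_sig c) l -> In c cs.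
Proof.
  induction l as [|r l [cs Hcs]]; [exists []; intros c []|].
  destruct (raw_ok k r) eqn:Hr.
  - exists (exist _ r Hr :: cs); intros c [Hc | Hc].
    + left; apply cell_val_inj; exact Hc.
    + right; apply Hcs, Hc.
  - exists cs; intros c [Hc | Hc]; [|apply Hcs, Hc].
    destruct c as [r' Hr']; simpl in Hc; subst; congruence.
Qed.

Lemma same_cluster_finite k (d : cell L k) :
  exists cs, forall c, same_cluster k d c -> In c cs.
Proof.
  destruct (cells_over k (raw_candidates k (proj1_sig d))) as [cs Hcs].
  exists cs; intros c Hc; apply Hcs, in_raw_candidates.
  intros a; apply (same_cluster_abs_coords Hc).
Qed.

Definition moves_within_clusters k (f : labelling L k (cell L k)) : Prop :=
  forall c d, f c = Some d -> same_cluster k c d.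

Definition partial_injective k X (f : labelling L k X) : Prop :=
  forall c c' d, f c = Some d -> f c' = Some d -> c = c'.

Lemma moves_within_clusters_act k t (f : labelling L k (cell L k)) :
  moves_within_clusters f -> moves_within_clusters (act t f).
Proof.
  intros Hf c d Hc; eapply rt_trans; [apply (same_cluster_twist_inv t) | exact (Hf _ _ Hc)].
Qed.

Lemma partial_injective_act k X t (f : labelling L k X) :
  partial_injective f -> partial_injective (act t f).
Proof. intros Hf c c' d Hc Hc'; exact (twist_inv_inj t _ _ (Hf _ _ _ Hc Hc')). Qed.

End Cells.

Section Run.
Variables (L : Type) (k : cube_kind) (I : Type) (lt : I -> I -> Prop).
Variables (lt_wf : well_founded lt) (s : I -> twist L).

Local Notation stage := (run_from_identity k lt_wf s).

Lemma run_from_identity_eq x : stage x = run_body k (lt := lt) s x (fun y _ => stage y).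
Proof.
  apply (Fix_eq (wf_slt lt_wf) (fun _ => labelling L k (cell L k)) (run_body k s)).
  intros x0 f g Hfg; replace g with f; [reflexivity|].
  apply functional_extensionality_dep; intro y.
  apply functional_extensionality_dep; intro p; apply Hfg.
Qed.

Lemma run_from_identity_ind (P : labelling L k (cell L k) -> Prop) :
  P (fun c => Some c) ->
  (forall t f, P f -> P (act t f)) ->
  (forall x (g : labelling L k (cell L k)),
      (forall y, slt lt y x -> P (stage y)) ->
      (forall c d, g c = Some d -> exists y0, slt lt y0 x /\
         forall y, slt lt y x -> y0 = y \/ slt lt y0 y -> stage y c = Some d) ->
      P g) ->
  forall x, P (stage x).
Proof.
  intros Hid Hact Hlim; apply (well_founded_ind (wf_slt lt_wf)); intros x IH.
  rewrite run_from_identity_eq; unfold run_body.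
  destruct (excluded_middle_informative (exists y, is_pred lt y x)) as [Hpred|_].
  - destruct (constructive_indefinite_description _ Hpred) as [[e|] [Hlt _]];
      [apply Hact, IH, Hlt | contradiction].
  - destruct (excluded_middle_informative (exists y, slt lt y x)) as [_|_]; [|exact Hid].
    apply (Hlim x); [exact IH|]; intros c d.
    destruct (excluded_middle_informative _) as [Hv|_]; [|discriminate].
    destruct (constructive_indefinite_description _ Hv) as [v [y0 [Hy0 Hev]]].
    simpl; intros ->; exists y0; split; [exact Hy0|].
    intros y Hy; exact (Hev y Hy).
Qed.

Hypothesis lt_total : forall a b, lt a b \/ a = b \/ lt b a.

Lemma slt_total (a b : option I) : a = b \/ slt lt a b \/ slt lt b a.
Proof.
  destruct a as [a|], b as [b|]; simpl; auto.
  destruct (lt_total a b) as [|[->|]]; auto.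
Qed.

Lemma stage_partial_perm_in_clusters x :
  moves_within_clusters (stage x) /\ partial_injective (stage x).
Proof.
  revert x.
  apply (run_from_identity_ind (fun f => moves_within_clusters f /\ partial_injective f)).
  - split; [intros c d Hc; injection Hc as <-; apply rt_refl|].
    intros c c' d Hc Hc'; congruence.
  - intros t f [Hcl Hinj]; split;
      [apply moves_within_clusters_act | apply partial_injective_act]; assumption.
  - intros x g IH Hev; split.
    + intros c d Hc; destruct (Hev c d Hc) as [y0 [Hy0 Hc0]].
      exact (proj1 (IH y0 Hy0) c d (Hc0 y0 Hy0 (or_introl eq_refl))).
    + intros c c' d Hc Hc'.
      destruct (Hev c d Hc) as [y0 [Hy0 Hc0]], (Hev c' d Hc') as [y1 [Hy1 Hc1]].
      (* both values are reached at the later of y0 and y1 *)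
      destruct (slt_total y0 y1) as [<- | [H01 | H10]].
      * exact (proj2 (IH y0 Hy0) c c' d (Hc0 y0 Hy0 (or_introl eq_refl))
                                          (Hc1 y0 Hy0 (or_introl eq_refl))).
      * exact (proj2 (IH y1 Hy1) c c' d (Hc0 y1 Hy1 (or_intror H01))
                                          (Hc1 y1 Hy1 (or_introl eq_refl))).
      * exact (proj2 (IH y0 Hy0) c c' d (Hc0 y0 Hy0 (or_introl eq_refl))
                                          (Hc1 y0 Hy0 (or_intror H10))).
Qed.

End Run.

Theorem mainTheorem19 (L : Type) (L_infinite : forall l : list L, exists x, ~ In x l)
  (k : cube_kind)
  (I : Type) (lt : I -> I -> Prop) (lt_wf : well_founded lt)
  (lt_trans : forall a b c, lt a b -> lt b c -> lt a c)
  (lt_total : forall a b, lt a b \/ a = b \/ lt b a)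
  (s : I -> twist L) :
  universally_convergent k lt_wf s ->
  exists g : cell L k -> cell L k,
    (forall c, terminal_from_identity k lt_wf s c = Some (g c)) /\
    (forall c d, g c = g d -> c = d) /\
    (forall d, exists c, g c = d) /\
    (forall c0 d, same_cluster k c0 d <-> exists e, same_cluster k c0 e /\ g e = d).
Proof.
  intro Hlegal.
  destruct (stage_partial_perm_in_clusters k lt_wf s lt_total None) as [Hcl Hinj].
  set (f := terminal_from_identity k lt_wf s) in *.
  set (g := fun c => match f c with Some d => d | None => c end).
  assert (f_g : forall c, f c = Some (g c)).
  { intro c; unfold g; destruct (f c) eqn:E; [reflexivity | contradiction (Hlegal c E)]. }
  assert (g_inj : forall c c', g c = g c' -> c = c').
  { intros c c' E; apply (Hinj c c' (g c)); [|rewrite E]; apply f_g. }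
  assert (g_cluster : forall c, same_cluster k c (g c)) by (intro c; apply Hcl, f_g).
  assert (g_onto_cluster : forall d, exists c, same_cluster k d c /\ g c = d).
  { intro d; destruct (same_cluster_finite d) as [cs Hcs].
    apply (inj_preserving_surj_on_finite (same_cluster k d) g cs Hcs); [| |apply rt_refl].
    - intros c Hc; eapply rt_trans; [exact Hc | apply g_cluster].
    - intros c c' _ _; apply g_inj. }
  exists g; split; [exact f_g|]; split; [exact g_inj|]; split.
  - intro d; destruct (g_onto_cluster d) as [c [_ gc]]; exists c; exact gc.
  - intros c0 d; split.
    + intro Hd; destruct (g_onto_cluster d) as [c [Hc gc]].
      exists c; split; [eapply rt_trans; eassumption | exact gc].
    + intros [e [He <-]]; eapply rt_trans; [exact He | apply g_cluster].
Qed.
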